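(* For all positive integers $\rho$ and $v$ (for which $\beta(\rho,v,4)$ is defined), \[ \beta(\rho,v,4) \le \rho\left( (8\rho - 7) + \max\left\{ 12, \left\lfloor \frac{v-4\rho}{3} \right\rfloor \right\} \right). \]
   Context: For integers $v \ge k \ge 2$, a $(v,k)$-packing is a pair $(X,\mathcal{B})$ where $X$ is a set of $v$ points and $\mathcal{B}$ is a set of $k$-subsets of $X$ (blocks) such that every pair of distinct points lies in at most one block. A partial parallel class (PPC) is a set of pairwise disjoint blocks; its size is the number of blocks. A PPC of size $\rho$ is maximum if the packing has no PPC of size $\rho+1$. $\beta(\rho,v,k)$ denotes the maximum number of blocks in a $(v,k)$-packing in which the maximum PPC has size $\rho$. *)

From mathcomp Require Import all_boot.
Set Implicit Arguments. Unset Strict Implicit. Unset Printing Implicit Defensive.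

Section Packing.
Variable v : nat.

Definition is_packing (k : nat) (B : {set {set 'I_v}}) : bool :=
  [forall b in B, #|b| == k] &&
  [forall x : 'I_v, forall y : 'I_v,
     (x != y) ==> (#|[set b in B | (x \in b) && (y \in b)]| <= 1)].

Definition is_ppc (B P : {set {set 'I_v}}) : bool :=
  (P \subset B) &&
  [forall b1 in P, forall b2 in P, (b1 != b2) ==> [disjoint b1 & b2]].

Definition max_ppc_size (B : {set {set 'I_v}}) (rho : nat) : bool :=
  [exists P, is_ppc B P && (#|P| == rho)] &&
  ~~ [exists P, is_ppc B P && (#|P| == rho.+1)].

Definition admissible (rho k : nat) (B : {set {set 'I_v}}) : bool :=
  is_packing k B && max_ppc_size B rho.

End Packing.

(* beta(rho,v,k): maximum number of blocks of a (v,k)-packing whose maximum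
   PPC has size rho (equals 0 when no such packing exists; see
   beta_defined). *)
Definition beta (rho v k : nat) : nat :=
  \max_(B : {set {set 'I_v}} | admissible rho k B) #|B|.

Definition beta_defined (rho v k : nat) : Prop :=
  exists B : {set {set 'I_v}}, admissible rho k B.

(* Fix a maximum partial parallel class P and let U be the k|P| points it covers.
   By maximality every other block meets U.  A block meeting U in at least two
   points is determined by a point x of U together with a second point of U
   outside the class of x, so there are at most |U|(|U| - k)/2 of them.  A block
   meeting U in a single point, lying in the class p, is a tangent to p; two
   disjoint tangents to p could replace p in P, so any two tangents to p meet.
   If some point x of p lies on k tangents to p, then every tangent to p passes
   through x (one missing x would meet those k tangents in distinct points among
   its k - 1 points outside U), and since they pairwise meet only in x there are
   at most (v - |U|)/(k - 1) of them; otherwise p carries at most k(k - 1). *)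

From mathcomp Require Import all_boot zify.
Set Implicit Arguments. Unset Strict Implicit. Unset Printing Implicit Defensive.

Lemma double_count_leq (T1 T2 : finType) (D : {set T1}) (Y : {set T2})
    (R : T1 -> T2 -> bool) a c :
  {in D, forall b, a <= #|[set y in Y | R b y]|} ->
  {in Y, forall y, #|[set b in D | R b y]| <= c} ->
  #|D| * a <= #|Y| * c.
Proof.
move=> Da Yc.
have card_sum (T : finType) (S : {set T}) (Q : pred T) :
    #|[set x in S | Q x]| = \sum_(x in S) Q x.
  rewrite -sum1_card (eq_bigl (fun x => (x \in S) && Q x)) ?big_mkcondr //.
  by move=> x; rewrite inE.
rewrite -!sum_nat_const.
apply: (@leq_trans (\sum_(b in D) #|[set y in Y | R b y]|)); first exact: leq_sum.
under eq_bigr do rewrite card_sum.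
rewrite exchange_big /=; apply: leq_sum => y yY.
by rewrite -card_sum; exact: Yc.
Qed.

Lemma leq_card_unique_witness (T1 T2 : finType) (D : {set T1}) (Y : {set T2})
    (R : T1 -> T2 -> bool) :
  {in D, forall b, exists2 y, y \in Y & R b y} ->
  {in Y, forall y, {in D &, forall b1 b2, R b1 y -> R b2 y -> b1 = b2}} ->
  #|D| <= #|Y|.
Proof.
move=> exR uniqR; rewrite -[#|D|]muln1 -[#|Y|]muln1.
apply: (double_count_leq (R := R)) => [b bD | y yY].
  by have [y yY Rby] := exR b bD; apply/card_gt0P; exists y; rewrite inE yY.
apply/card_le1_eqP => b1 b2; rewrite !inE => /andP[b1D R1] /andP[b2D R2].
exact: (uniqR y yY b2 b1 b2D b1D R2 R1).
Qed.

Lemma is_ppcP v (B P : {set {set 'I_v}}) :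
  reflect (P \subset B /\ trivIset P) (is_ppc B P).
Proof.
apply: (iffP andP) => -[PB tP]; split => //.
  apply/trivIsetP => b1 b2 b1P b2P.
  by move/forall_inP: tP => /(_ b1 b1P)/forall_inP/(_ b2 b2P)/implyP.
apply/forall_inP => b1 b1P; apply/forall_inP => b2 b2P; apply/implyP.
by move/trivIsetP: tP; apply.
Qed.

Section MaximumPPC.

Variables (v k : nat) (B P : {set {set 'I_v}}).
Hypotheses (k_gt1 : 1 < k) (packB : is_packing k B) (ppcP : is_ppc B P).
Hypothesis maxP : ~~ [exists Q, is_ppc B Q && (#|Q| == #|P|.+1)].

Let U := cover P.

Lemma card_block b : b \in B -> #|b| = k.
Proof. by move: packB => /andP[/forall_inP cardB _] /cardB/eqP. Qed.

Lemma block_eq b1 b2 x y : b1 \in B -> b2 \in B -> x != y ->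
  x \in b1 -> y \in b1 -> x \in b2 -> y \in b2 -> b1 = b2.
Proof.
move: packB => /andP[_ /forallP pairB] b1B b2B xy xb1 yb1 xb2 yb2.
move/forallP: (pairB x) => /(_ y); rewrite xy => /card_le1_eqP; apply.
  by rewrite inE b2B xb2 yb2.
by rewrite inE b1B xb1 yb1.
Qed.

Lemma set0_notin_blocks (Q : {set {set 'I_v}}) : Q \subset B -> set0 \notin Q.
Proof.
move=> QB; apply/negP => /(subsetP QB)/card_block.
by rewrite cards0 => k0; move: k_gt1; rewrite -k0.
Qed.

Lemma ppcU1 (Q : {set {set 'I_v}}) c : is_ppc B Q -> c \in B ->
    {in Q, forall q : {set 'I_v}, [disjoint c & q]} ->
  is_ppc B (c |: Q) /\ #|c |: Q| = #|Q|.+1.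
Proof.
move=> /is_ppcP[QB tQ] cB dcQ.
have [tcQ cNQ] := trivIsetU1 dcQ tQ (set0_notin_blocks QB).
split; last by rewrite cardsU1 cNQ.
by apply/is_ppcP; split; rewrite // subUset sub1set cB.
Qed.

Lemma no_larger_ppc (Q : {set {set 'I_v}}) : is_ppc B Q -> #|Q| = #|P|.+1 -> False.
Proof. by move=> ppcQ cardQ; case/existsP: maxP; exists Q; rewrite ppcQ cardQ /=. Qed.

Lemma class_block p : p \in P -> p \in B.
Proof. by move/is_ppcP: ppcP => [/subsetP PB _]; exact: PB. Qed.

Lemma card_cover_ppc : #|U| = #|P| * k.
Proof.
move/is_ppcP: ppcP => [PB /eqP <-].
rewrite -sum_nat_const; apply: eq_bigr => p pP.
exact/card_block/(subsetP PB).
Qed.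

Lemma block_meets_cover b : b \in B -> b \notin P -> ~~ [disjoint b & U].
Proof.
move=> bB bNP; apply/negP => dbU.
have [ppc_bP card_bP] := ppcU1 ppcP bB (fun p pP => disjointWr (bigcup_sup p pP) dbU).
exact: no_larger_ppc ppc_bP card_bP.
Qed.

Lemma disjoint_other_classes b p : p \in P -> b :&: U \subset p ->
  {in P :\ p, forall q : {set 'I_v}, [disjoint b & q]}.
Proof.
move=> pP sbp q /setD1P[qp qP]; rewrite -setI_eq0; apply/eqP/setP => z.
rewrite !inE; apply/negbTE/andP => -[zb zq].
have zp : z \in p by apply: (subsetP sbp); rewrite inE zb (subsetP (bigcup_sup q qP)).
move/is_ppcP: ppcP => [_ /trivIsetP tP].
by move: (tP q p qP pP qp) => /disjointFr/(_ zq); rewrite zp.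
Qed.

Lemma blocks_meet_of_traces_in_class b b' p : b \in B -> b' \in B ->
  p \in P -> b :&: U \subset p -> b' :&: U \subset p -> ~~ [disjoint b & b'].
Proof.
move=> bB b'B pP sbp sb'p; apply/negP => dbb'.
have ppcPp : is_ppc B (P :\ p).
  move/is_ppcP: ppcP => [PB tP]; apply/is_ppcP; split.
    exact: subset_trans (subD1set P p) PB.
  exact: trivIsetD.
have [ppc' card'] := ppcU1 ppcPp b'B (disjoint_other_classes pP sb'p).
have dbQ : {in b' |: (P :\ p), forall q : {set 'I_v}, [disjoint b & q]}.
  by move=> q /setU1P[->|qPp] //; apply: disjoint_other_classes pP sbp q qPp.
have [ppc'' card''] := ppcU1 ppc' bB dbQ.
apply: no_larger_ppc ppc'' _.
by rewrite card'' card' (cardsD1 p P) pP.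
Qed.

Let secant := [set b in B :\: P | 1 < #|b :&: U|].

Lemma card_secant : #|secant| * 2 <= #|U| * (#|U| - k).
Proof.
apply: (double_count_leq (R := fun (b : {set 'I_v}) (x : 'I_v) => x \in b)) => [b | x xU].
  rewrite inE => /andP[_ secb]; apply: leq_trans secb _.
  by apply: subset_leq_card; apply/subsetP => x; rewrite !inE andbC.
have [p pP xp] := bigcupP xU.
have pB := class_block pP.
have -> : #|U| - k = #|U :\: p|.
  by rewrite cardsD (setIidPr (bigcup_sup p pP)) (card_block pB).
apply: (leq_card_unique_witness (R := fun (b : {set 'I_v}) (x : 'I_v) => x \in b)) => [b | y].
  rewrite !inE => /andP[/andP[/andP[bNP bB] secb] xb].
  have : 0 < #|(b :&: U) :\ x|.
    by move: secb; rewrite (cardsD1 x) !inE xb xU.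
  case/card_gt0P => y; rewrite !inE => /andP[yx /andP[yb yU]].
  exists y => //; rewrite inE yU andbT; apply: contra bNP => yp.
  by rewrite (block_eq bB pB yx yb xb yp xp).
rewrite !inE => /andP[ypN _] b1 b2; rewrite !inE.
move=> /andP[/andP[/andP[_ b1B] _] xb1] /andP[/andP[/andP[_ b2B] _] xb2] yb1 yb2.
have xy : x != y by apply: contraNneq ypN => <-.
exact: block_eq b1B b2B xy xb1 yb1 xb2 yb2.
Qed.

Let tangent := [set b in B :\: P | #|b :&: U| <= 1].
Let tangent_at (p : {set 'I_v}) := [set b in tangent | ~~ [disjoint b & p]].

Lemma tangent_trace_sub b p : p \in P -> b \in tangent_at p -> b :&: U \subset p.
Proof.
move=> pP; rewrite !inE -setI_eq0 => /andP[/andP[_ tanb] /set0Pn[x]].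
rewrite inE => /andP[xb xp]; apply/subsetP => y ybU.
have xbU : x \in b :&: U by rewrite inE xb (subsetP (bigcup_sup p pP)).
by move/card_le1_eqP: tanb => /(_ x y xbU ybU) ->.
Qed.

Lemma tangent_block b p : b \in tangent_at p -> b \in B.
Proof. by rewrite !inE => /andP[/andP[/andP[]]]. Qed.

Lemma card_tangent_outside b p : p \in P -> b \in tangent_at p -> #|b :\: U| = k.-1.
Proof.
move=> pP bp; have bB := tangent_block bp.
move: bp; rewrite !inE -setI_eq0 => /andP[/andP[_ tanb] /set0Pn[x]].
rewrite inE => /andP[xb xp].
have trace1 : #|b :&: U| = 1.
  apply/eqP; rewrite eqn_leq tanb card_gt0; apply/set0Pn; exists x.
  by rewrite inE xb (subsetP (bigcup_sup p pP)).
by rewrite cardsD trace1 (card_block bB) subn1.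
Qed.

Lemma tangent_at_concurrent p x : p \in P -> x \in p ->
    k <= #|[set b in tangent_at p | x \in b]| ->
  {in tangent_at p, forall b : {set 'I_v}, x \in b}.
Proof.
move=> pP xp many b' b'p; apply/negPn/negP => xNb'.
have xU : x \in U := subsetP (bigcup_sup p pP) x xp.
suff : #|[set b in tangent_at p | x \in b]| <= #|b' :\: U|.
  by rewrite (card_tangent_outside pP b'p); move: many k_gt1; lia.
apply: (leq_card_unique_witness (R := fun (b : {set 'I_v}) (z : 'I_v) => z \in b)).
  move=> b; rewrite inE => /andP[bp xb].
  have := blocks_meet_of_traces_in_class (tangent_block bp) (tangent_block b'p) pP
    (tangent_trace_sub pP bp) (tangent_trace_sub pP b'p).
  rewrite -setI_eq0 => /set0Pn[z]; rewrite inE => /andP[zb zb'].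
  exists z => //; rewrite inE zb' andbT; apply: contra xNb' => zU.
  move: bp; rewrite !inE => /andP[/andP[_ /card_le1_eqP tanb] _].
  by rewrite (tanb z x) // inE ?zb ?xb.
move=> z; rewrite inE => /andP[zNU _] b1 b2 /setIdP[b1p xb1] /setIdP[b2p xb2] zb1 zb2.
have xz : x != z by apply: contraNneq zNU => <-.
exact: block_eq (tangent_block b1p) (tangent_block b2p) xz xb1 zb1 xb2 zb2.
Qed.

Lemma card_tangent_at p : p \in P ->
  #|tangent_at p| <= maxn (k * k.-1) ((v - #|U|) %/ k.-1).
Proof.
move=> pP; have pB := class_block pP.
case: (boolP [exists x in p, k <= #|[set b in tangent_at p | x \in b]|]).
  case/exists_inP => x xp many; have through_x := tangent_at_concurrent pP xp many.
  have xU : x \in U := subsetP (bigcup_sup p pP) x xp.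
  apply: leq_trans (leq_maxr _ _); rewrite leq_divRL ?ltn_predRL //.
  have -> : v - #|U| = #|~: U| * 1.
    by rewrite muln1 -[X in X - _](card_ord v) -(cardsC U) addKn.
  apply: (double_count_leq (R := fun (b : {set 'I_v}) (w : 'I_v) => w \in b)).
    move=> b bp; rewrite -(card_tangent_outside pP bp); apply: subset_leq_card.
    by apply/subsetP => w; rewrite !inE => /andP[-> ->].
  move=> w; rewrite inE => wNU.
  apply/card_le1_eqP => b1 b2 /setIdP[b1p wb1] /setIdP[b2p wb2].
  have xw : x != w by apply: contraNneq wNU => <-.
  exact: block_eq (tangent_block b2p) (tangent_block b1p) xw (through_x b2 b2p) wb2
    (through_x b1 b1p) wb1.
move=> few; apply: leq_trans (leq_maxl _ _).
rewrite -[#|tangent_at p|]muln1 -{1}(card_block pB).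
apply: (double_count_leq (R := fun (b : {set 'I_v}) (x : 'I_v) => x \in b)) => [b | x xp].
  rewrite !inE -setI_eq0 => /andP[_ /set0Pn[x]]; rewrite inE => /andP[xb xp].
  by apply/card_gt0P; exists x; rewrite inE xp xb.
rewrite -ltnS (ltn_predK k_gt1) ltnNge; apply: contra few => many.
by apply/exists_inP; exists x.
Qed.

Lemma card_tangent : #|tangent| <= #|P| * maxn (k * k.-1) ((v - #|U|) %/ k.-1).
Proof.
rewrite -[#|tangent|]muln1.
apply: (double_count_leq (R := fun b p : {set 'I_v} => ~~ [disjoint b & p])).
  move=> b; rewrite inE => /andP[/setDP[bB bNP] _].
  have := block_meets_cover bB bNP; rewrite -setI_eq0 => /set0Pn[x].
  rewrite inE => /andP[xb /bigcupP[p pP xp]].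
  apply/card_gt0P; exists p; rewrite inE pP -setI_eq0 /=.
  by apply/set0Pn; exists x; rewrite inE xb xp.
exact: card_tangent_at.
Qed.

Theorem card_packing_max_ppc :
  #|B| <= #|P| + (#|P| * k) * (#|P| * k - k) %/ 2
          + #|P| * maxn (k * k.-1) ((v - #|P| * k) %/ k.-1).
Proof.
have PB : P \subset B by move/is_ppcP: ppcP => [].
have split_blocks : #|B| <= #|P| + #|secant| + #|tangent|.
  rewrite -(cardsID P B) (setIidPr PB) -addnA leq_add2l.
  apply: leq_trans (leq_card_setU secant tangent).1.
  apply/subset_leq_card/subsetP => b bBP; rewrite !inE; move: bBP; rewrite inE => ->.
  by case: ltnP.
apply: leq_trans split_blocks _; rewrite -card_cover_ppc.
apply: leq_add; last exact: card_tangent.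
by rewrite leq_add2l leq_divRL // card_secant.
Qed.

End MaximumPPC.

Theorem theorem3p2 (rho v : nat) :
  0 < rho -> 0 < v -> beta_defined rho v 4 ->
  beta rho v 4 <= rho * ((8 * rho - 7) + maxn 12 ((v - 4 * rho) %/ 3)).
Proof.
move=> rho_gt0 _ _; apply/bigmax_leqP => B.
case/and3P => packB /existsP[P /andP[ppcP /eqP cardP]] maxP.
rewrite -cardP in maxP; have := card_packing_max_ppc (isT : 1 < 4) packB ppcP maxP.
rewrite cardP [rho * 4]mulnC (_ : 4 * 4.-1 = 12) // => bound.
have half : 4 * rho * (4 * rho - 4) %/ 2 = rho * (8 * rho - 8).
  by rewrite -[X in X %/ 2](_ : rho * (8 * rho - 8) * 2 = _) ?mulnK //; nia.
apply: leq_trans bound _; rewrite half mulnDr leq_add2r addnC -mulnSr leq_mul2l.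
by apply/orP; right; lia.
Qed.
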